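(* Let $\mathcal{B}\models Th(\mathbb{N})$ be nonstandard, $\Delta\in B$ nonstandard, $P$ the $2^\Delta$-th prime of $\mathcal{B}$, and $S\subseteq B^3$ a set definable in $\mathcal{B}$ of pairwise disjoint triples $(p,q,r)$ of primes with $3p+5q=2r$ and $p,q,r>P$. Let $O=\{Q\in B: n\mid Q,\ 2^{n\Delta}\mid Q \text{ for all standard } 0<n\}$ and $A=\{Q+z\in B: Q\in O, z\in\mathbb{Z}\}$; for $y\in A$ let $O_y$ be the unique element of $O$ with $y-O_y\in\mathbb{Z}$. For $Q\in O$ let $\varepsilon(Q)$ be the $\mathbb{P}\times\mathbb{P}$-matrix with $\varepsilon(Q)_{pq}=Q/2^\Delta$ if $p,q\le P$; $Q/3$ if $p,q$ belong to the same triple of $S$ (allowing $p=q$); $Q$ if $p=q>P$ lies in no triple of $S$; $0$ otherwise. For $y\in A$ put $\varepsilon(y)=\varepsilon(O_y)+(y-O_y)I$, and define $e:B\times A\to B$ by $e(0,0)=1$, $e(0,z)=0$ for $z\ne0$, and $e(x,y)=\prod_{p\in\mathbb{P}}p^{(\varepsilon(y)v(x))_p}$ for $x\ne0$. Then for all $Q,R\in O$ and every $(p,q,r)\in S$, $$e(R\cdot 3p,Q+1)+e(R\cdot 5q,Q+1)=e(R\cdot 2r,Q+1).$$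
   Context: $\mathbb{P}$ is the set of primes of $\mathcal{B}$, $v(x)=(v_p(x))_{p\in\mathbb{P}}$ with $v_p(x)$ the exponent of $p$ in $x$ (computed in $\mathcal{B}$), $I$ the identity matrix; the matrix–vector product is computed in $\mathcal{B}$. *)

From Stdlib Require Import ClassicalEpsilon.
From mathcomp Require Import all_boot ssralg ssrint.
Set Implicit Arguments. Unset Strict Implicit. Unset Printing Implicit Defensive.

Inductive aterm : Type :=
| tvar  : nat -> aterm
| tzero : aterm
| tsucc : aterm -> aterm
| tadd  : aterm -> aterm -> aterm
| tmul  : aterm -> aterm -> aterm.

Inductive aform : Type :=
| feq  : aterm -> aterm -> aform
| fbot : aform
| fimp : aform -> aform -> aform
| fand : aform -> aform -> aform
| for_ : aform -> aform -> aform
| fall : aform -> aform      (* de Bruijn: binds variable 0 *)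
| fex  : aform -> aform.

Record arith_struct : Type := ArithStruct {
  car :> Type;
  s0 : car;
  sS : car -> car;
  sadd : car -> car -> car;
  smul : car -> car -> car }.

Definition scons (T : Type) (a : T) (f : nat -> T) : nat -> T :=
  fun i => match i with 0 => a | S k => f k end.

Fixpoint teval (M : arith_struct) (s : nat -> M) (t : aterm) : M :=
  match t with
  | tvar n => s n
  | tzero => s0 M
  | tsucc u => sS (teval s u)
  | tadd u v => sadd (teval s u) (teval s v)
  | tmul u v => smul (teval s u) (teval s v)
  end.

Fixpoint sat (M : arith_struct) (s : nat -> M) (f : aform) : Prop :=
  match f with
  | feq u v => teval s u = teval s v
  | fbot => False
  | fimp a b => sat s a -> sat s b
  | fand a b => sat s a /\ sat s b
  | for_ a b => sat s a \/ sat s b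
  | fall a => forall x : M, sat (scons x s) a
  | fex a => exists x : M, sat (scons x s) a
  end.

Definition Nstd : arith_struct := @ArithStruct nat 0 S addn muln.

(* B |= Th(N): every formula true in N under all assignments (i.e. whose
   universal closure is a true sentence) is true in B under all assignments. *)
Definition models_ThN (B : arith_struct) : Prop :=
  forall f : aform, (forall r : nat -> nat, sat (M:=Nstd) r f) ->
                   forall s : nat -> B, sat s f.

Definition num (B : arith_struct) (n : nat) : B := iter n (@sS B) (s0 B).
Definition standard (B : arith_struct) (x : B) : Prop := exists n, x = num B n.
Definition ltB (B : arith_struct) (x y : B) : Prop := exists k, y = sadd x (sS k).
Definition dvdB (B : arith_struct) (d x : B) : Prop := exists k, x = smul d k.
Definition primeB (B : arith_struct) (p : B) : Prop :=
  ltB (num B 1) p /\ forall d k : B, p = smul d k -> d = num B 1 \/ d = p.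

(* "Computed in B": the B-interpretation of an arithmetical relation R on
   assignments, i.e. B satisfies some formula that defines R in N.
   (Any two such formulas are equivalent in N, hence in B.) *)
Definition inB (B : arith_struct) (R : (nat -> nat) -> Prop) (s : nat -> B) : Prop :=
  exists f : aform, (forall r : nat -> nat, sat (M:=Nstd) r f <-> R r) /\ sat s f.

Definition pb (P : Prop) : bool :=
  if excluded_middle_informative P then true else false.

(* p is the k-th prime (k >= 1, the first prime being 2) *)
Definition is_kth_prime (k p : nat) : Prop :=
  prime p /\ count prime (iota 0 p) = k.-1.

(* P = the (2^Delta)-th prime; assignment (P, Delta) *)
Definition R_P (r : nat -> nat) : Prop := is_kth_prime (2 ^ r 1) (r 0).

(* t = 2^(n*Delta); assignment (t, Delta) *)
Definition R_pow2 (n : nat) (r : nat -> nat) : Prop := r 0 = 2 ^ (n * r 1).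

Section Meta.
Variable SN : nat -> nat -> nat -> Prop.
Variables (Delta P Q : nat).

Definition in_triple (p : nat) : Prop :=
  exists a b c, SN a b c /\ (p = a \/ p = b \/ p = c).
Definition same_triple (p q : nat) : Prop :=
  exists a b c, SN a b c /\ (p = a \/ p = b \/ p = c) /\ (q = a \/ q = b \/ q = c).

Definition epsN (p q : nat) : nat :=
  if (p <= P) && (q <= P) then Q %/ 2 ^ Delta
  else if pb (same_triple p q) then Q %/ 3
  else if (p == q) && (P < p) && ~~ pb (in_triple p) then Q
  else 0.

(* exponent of p in e(x, Q + z) : (eps(Q) v(x) + z v(x))_p, z = zp - zn *)
Definition expoN (zp zn x p : nat) : nat :=
  (\sum_(q < x.+1 | prime q) epsN p q * logn q x) + zp * logn p x - zn * logn p x.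

Definition eN_rel (zp zn x v : nat) : Prop :=
  if x == 0 then v = (if (Q == 0) && (zp == 0) && (zn == 0) then 1 else 0)
  else exists M : nat, (forall p, prime p -> M <= p -> expoN zp zn x p = 0) /\
         v = \prod_(p < M | prime p) p ^ expoN zp zn x p.
End Meta.

Definition int_pos (z : int) : nat := match z with Posz n => n | Negz _ => 0 end.
Definition int_neg (z : int) : nat := match z with Posz _ => 0 | Negz n => n.+1 end.

(* assignment layout for e: (v, x, Q, Delta, P, params of theta ...);
   theta defines S with assignment (p, q, r, params ...) *)
Definition R_e (theta : aform) (z : int) (r : nat -> nat) : Prop :=
  eN_rel (fun a b c => sat (M:=Nstd) (scons a (scons b (scons c (fun i => r (5 + i))))) theta)
         (r 3) (r 4) (r 2) (int_pos z) (int_neg z) (r 1) (r 0).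

Section InB.
Variables (B : arith_struct) (Delta : B).

Definition inO (Q : B) : Prop :=
  forall n : nat, 0 < n ->
    dvdB (num B n) Q /\
    exists t : B, inB (R_pow2 n) (scons t (scons Delta (fun _ => s0 B))) /\ dvdB t Q.

Definition plusZ (Q : B) (z : int) (y : B) : Prop :=
  match z with
  | Posz n => y = sadd Q (num B n)
  | Negz n => sadd y (num B n.+1) = Q
  end.

(* v = e(x, y), S defined by theta with parameters sigma *)
Definition eB (P : B) (theta : aform) (sigma : nat -> B) (x y v : B) : Prop :=
  exists (Q : B) (z : int), inO Q /\ plusZ Q z y /\
    inB (R_e theta z)
      (scons v (scons x (scons Q (scons Delta (scons P sigma))))).
End InB.

(* In the standard model, for x <> 0, e(x, Q + 1) = x * F(x), where
   F(x) = prod_s s ^ (eps(Q) v(x))_s and (eps(Q) v(x))_s is additive in x.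
   The columns of eps(Q) indexed by 2, 3 and 5 (all <= P) coincide, and so do
   the columns indexed by the members p, q, r of a triple of S; hence F takes
   the same value at R*3p, R*5q and R*2r, and the identity reduces to
   3p + 5q = 2r. Once e is expressed by an arithmetic formula (iterated sums
   and products are coded with Goedel's beta function), the universal closure
   of the statement, with the hypotheses on S, P and Delta as premises, holds
   in N and hence in B. *)

From mathcomp Require Import all_boot ssralg ssrint zify.
From Stdlib Require Import Setoid ClassicalEpsilon Classical.
Set Implicit Arguments. Unset Strict Implicit. Unset Printing Implicit Defensive.

Local Notation "# n" := (tvar n) (at level 0, n at level 0, format "# n").

Fixpoint tsubst (sg : nat -> aterm) (t : aterm) : aterm :=
  match t with
  | tvar n => sg n
  | tzero => tzero
  | tsucc u => tsucc (tsubst sg u)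
  | tadd u v => tadd (tsubst sg u) (tsubst sg v)
  | tmul u v => tmul (tsubst sg u) (tsubst sg v)
  end.

Definition tshift (t : aterm) : aterm := tsubst (fun n => tvar n.+1) t.

Definition up_subst (sg : nat -> aterm) (n : nat) : aterm :=
  match n with 0 => tvar 0 | k.+1 => tshift (sg k) end.

Fixpoint fsubst (sg : nat -> aterm) (f : aform) : aform :=
  match f with
  | feq u v => feq (tsubst sg u) (tsubst sg v)
  | fbot => fbot
  | fimp a b => fimp (fsubst sg a) (fsubst sg b)
  | fand a b => fand (fsubst sg a) (fsubst sg b)
  | for_ a b => for_ (fsubst sg a) (fsubst sg b)
  | fall a => fall (fsubst (up_subst sg) a)
  | fex a => fex (fsubst (up_subst sg) a)
  end.

Section Semantics.
Variable M : arith_struct.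

Lemma teval_ext (s s' : nat -> M) t : s =1 s' -> teval s t = teval s' t.
Proof. by move=> h; elim: t => //= [u ->|u -> v ->|u -> v ->]. Qed.

Lemma sat_ext f : forall s s' : nat -> M, s =1 s' -> (sat s f <-> sat s' f).
Proof.
elim: f => //= [u v|a IHa b IHb|a IHa b IHb|a IHa b IHb|a IHa|a IHa] s s' h.
- by rewrite (teval_ext u h) (teval_ext v h).
- by rewrite (IHa s s' h) (IHb s s' h).
- by rewrite (IHa s s' h) (IHb s s' h).
- by rewrite (IHa s s' h) (IHb s s' h).
- have e x : sat (scons x s) a <-> sat (scons x s') a by apply: IHa; case.
  by split=> H x; apply/e.
- have e x : sat (scons x s) a <-> sat (scons x s') a by apply: IHa; case.
  by split=> -[x H]; exists x; apply/e.
Qed.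

Lemma sat_eq_ext f (s s' : nat -> M) : s =1 s' -> sat s f -> sat s' f.
Proof. by move/sat_ext=> ->. Qed.

Lemma teval_subst (s : nat -> M) sg t :
  teval s (tsubst sg t) = teval (fun n => teval s (sg n)) t.
Proof. by elim: t => //= [u ->|u -> v ->|u -> v ->]. Qed.

Lemma teval_shift (s : nat -> M) x t : teval (scons x s) (tshift t) = teval s t.
Proof. by rewrite /tshift teval_subst. Qed.

Lemma scons_up_subst (s : nat -> M) sg x :
  (fun n => teval (scons x s) (up_subst sg n)) =1 scons x (fun n => teval s (sg n)).
Proof. by case=> //= n; rewrite teval_shift. Qed.

Lemma sat_subst f : forall (s : nat -> M) sg,
  sat s (fsubst sg f) <-> sat (fun n => teval s (sg n)) f.
Proof.
elim: f => //= [u v|a IHa b IHb|a IHa b IHb|a IHa b IHb|a IHa|a IHa] s sg.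
- by rewrite !teval_subst.
- by rewrite IHa IHb.
- by rewrite IHa IHb.
- by rewrite IHa IHb.
- split=> H x; [move: (H x); rewrite IHa | rewrite IHa; move: (H x)];
    by apply: sat_eq_ext => n; rewrite scons_up_subst.
- split=> -[x H]; exists x; [move: H; rewrite IHa | rewrite IHa; move: H];
    by apply: sat_eq_ext => n; rewrite scons_up_subst.
Qed.

End Semantics.

Fixpoint prefix_subst (ts : seq aterm) (off : nat) : nat -> aterm :=
  match ts with
  | [::] => fun n => tvar (Nat.add off n)
  | t :: ts' => fun n => match n with 0 => t | k.+1 => prefix_subst ts' off k end
  end.

(* [inst ts off f] plugs the terms [ts] into the first variables of [f] and
   renames every further variable [size ts + n] to [off + n]. It is locked so
   that [cbn] never unfolds the substitution. *)
Definition inst_def (ts : seq aterm) (off : nat) (f : aform) : aform :=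
  fsubst (prefix_subst ts off) f.
Fact inst_key : unit. Proof. exact: tt. Qed.
Definition inst := locked_with inst_key inst_def.
Lemma instE : inst = inst_def. Proof. by rewrite /inst; case: inst_key. Qed.

Lemma sat_inst (M : arith_struct) (s : nat -> M) ts off f :
  sat s (inst ts off f) <-> sat (fun n => teval s (prefix_subst ts off n)) f.
Proof. by rewrite instE /inst_def sat_subst. Qed.

Lemma sat_inst_scons (M : arith_struct) (s : nat -> M) ts off f :
  sat s (inst ts off f) <->
  sat (foldr (@scons M) (fun i => s (Nat.add off i)) (map (teval s) ts)) f.
Proof.
rewrite sat_inst; apply: sat_ext; elim: ts => [|t ts IH] //.
by case=> [|n] /=; rewrite ?IH.
Qed.

(* [F] defines [Rel] when it reads its first [a] variables as arguments and the
   remaining ones as parameters [g]. *)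
Definition defines (F : aform) (a : nat)
    (Rel : (nat -> nat) -> (nat -> nat) -> Prop) : Prop :=
  forall s g : nat -> nat, (forall n, s (Nat.add a n) = g n) ->
    (sat (M:=Nstd) s F <-> Rel s g).

Lemma teval_prefix_subst_drop (M : arith_struct) (s : nat -> M) ts off n :
  teval s (prefix_subst ts off (Nat.add (size ts) n)) = s (Nat.add off n).
Proof. by elim: ts. Qed.

Lemma sat_inst_defines F a Rel (s g : nat -> nat) ts off :
  defines F a Rel -> size ts = a -> (forall n, s (Nat.add off n) = g n) ->
  (sat (M:=Nstd) s (inst ts off F) <->
   Rel (fun n => teval (M:=Nstd) s (prefix_subst ts off n)) g).
Proof.
move=> hF hs hg; rewrite sat_inst; apply: hF => n.
by rewrite -hs teval_prefix_subst_drop hg.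
Qed.

(* Rewrites [sat s (inst ts off F)] with the definability lemma [D] of [F],
   matching the parameters of [F] with [G] through the hypothesis in context. *)
Ltac use_def D G := rewrite (sat_inst_defines (g:=G) D);
  [ | reflexivity | let n := fresh "n" in intro n; simpl; try reflexivity;
      try match goal with H : forall _ : nat, _ = ?g _ |- _ = ?g _ => exact: H end ].

Definition tnum (n : nat) : aterm := iter n tsucc tzero.
Definition fnot (a : aform) : aform := fimp a fbot.
Definition fif (c a b : aform) : aform := for_ (fand c a) (fand (fnot c) b).

Lemma pb_bool (b : bool) : pb b = b.
Proof. by rewrite /pb; case: excluded_middle_informative; case: b. Qed.

Lemma pbP (A : Prop) : reflect A (pb A).
Proof. by rewrite /pb; case: excluded_middle_informative => h; constructor. Qed.

Lemma pb_iff (A B : Prop) : (A <-> B) -> pb A = pb B.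
Proof.
rewrite /pb => e.
case: excluded_middle_informative => hA; case: excluded_middle_informative => hB //.
- by case: hB; apply/e.
- by case: hA; apply/e.
Qed.

Lemma sat_fif (M : arith_struct) (s : nat -> M) c {a b : aform} C :
  (sat s c <-> C) -> sat s (fif c a b) <-> if pb C then sat s a else sat s b.
Proof.
move=> e; rewrite /fif /fnot /pb /= e.
by case: (excluded_middle_informative C) => h /=; tauto.
Qed.

(** * Goedel's beta function *)

Definition beta (c d i : nat) : nat := c %% (1 + i.+1 * d).

Lemma coprime_beta_moduli m i j : i < j -> j <= m ->
  coprime (1 + i.+1 * m`!) (1 + j.+1 * m`!).
Proof.
move=> lij ljm; set a := 1 + _; set b := 1 + _.
have g_gt0 : 0 < gcdn a b by rewrite gcdn_gt0 /a add1n.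
rewrite /coprime eqn_leq g_gt0 andbT leqNgt; apply/negP => /pdiv_prime pp.
set p := pdiv _ in pp.
have p_a : p %| a := dvdn_trans (pdiv_dvd _) (dvdn_gcdl _ _).
have p_b : p %| b := dvdn_trans (pdiv_dvd _) (dvdn_gcdr _ _).
have p_fact : p %| m`!.
  have : p %| (j - i) * m`! by rewrite -subSS mulnBl -(subnDl 1) dvdn_sub.
  rewrite Euclid_dvdM // => /orP [pji|//]; apply: dvdn_trans pji (dvdn_fact _).
  by rewrite subn_gt0 lij (leq_trans (leq_subr _ _) ljm).
move: p_a; rewrite /a dvdn_addl ?dvdn_mull // dvdn1 => /eqP p1.
by rewrite p1 in pp.
Qed.

Lemma coprime_prod (I : Type) (r : seq I) (P : pred I) (F : I -> nat) m :
  (forall i, P i -> coprime (F i) m) -> coprime (\prod_(i <- r | P i) F i) m.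
Proof.
move=> h; apply: (big_ind (fun x => coprime x m)) => // [|x y cx cy].
  exact: coprime1n.
by rewrite coprimeMl cx cy.
Qed.

Lemma chinese_seq (mo r : nat -> nat) n :
  (forall i j, i < j -> j <= n -> coprime (mo i) (mo j)) ->
  exists c, forall i, i <= n -> c = r i %[mod mo i].
Proof.
elim: n => [_|n IH cop]; first by exists (r 0) => -[].
have [c hc] := IH (fun i j lij ljn => cop i j lij (leqW ljn)).
set mp := \prod_(i < n.+1) mo i.
have cop_mp : coprime mp (mo n.+1) by apply: coprime_prod => i _; apply: cop.
exists (chinese mp (mo n.+1) c (r n.+1)) => i; rewrite leq_eqVlt => /orP [/eqP ->|lin].
  exact: chinese_modr.
have dv : mo i %| mp by rewrite /mp (bigD1 (Ordinal lin)) ?dvdn_mulr.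
by rewrite -(modn_dvdm _ dv) chinese_modl // modn_dvdm // hc.
Qed.

Lemma beta_exists (n : nat) (g : nat -> nat) :
  exists c d, forall i, i <= n -> beta c d i = g i.
Proof.
set m := n + \max_(i < n.+1) g i.
have [c hc] := @chinese_seq (fun i => 1 + i.+1 * m`!) g n
  (fun i j lij ljn => coprime_beta_moduli lij (leq_trans ljn (leq_addr _ _))).
exists c, m`! => i lin; rewrite /beta hc // modn_small // add1n ltnS.
apply: leq_trans (leq_pmull _ (ltn0Sn i)); apply: leq_trans (fact_geq _).
have gi_max := leq_bigmax (F := fun i : 'I_n.+1 => g i) (@Ordinal n.+1 i lin).
by rewrite (leq_trans gi_max) ?leq_addl.
Qed.

Definition Fle : aform := fex (feq #2 (tadd #1 #0)).
Lemma Fle_def : defines Fle 2 (fun s _ => s 0 <= s 1).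
Proof.
move=> s g _ /=; split=> [[k ->]|h]; first by rewrite leq_addr.
by exists (s 1 - s 0); rewrite subnKC.
Qed.

Definition Flt : aform := fex (feq #2 (tadd #1 (tsucc #0))).
Lemma Flt_def : defines Flt 2 (fun s _ => s 0 < s 1).
Proof.
move=> s g _ /=; split=> [[k ->]|h]; first by rewrite addnS ltnS leq_addr.
by exists (s 1 - (s 0).+1); rewrite addnS -addSn subnKC.
Qed.

Definition Fdvd : aform := fex (feq #2 (tmul #1 #0)).
Lemma Fdvd_def : defines Fdvd 2 (fun s _ => s 0 %| s 1).
Proof.
move=> s g _ /=; split=> [[k ->]|/dvdnP [k ->]]; first by rewrite dvdn_mulr.
by exists k; rewrite mulnC.
Qed.

Definition Fprime : aform :=
  fand (fex (feq #1 (tadd (tnum 1) (tsucc #0))))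
       (fall (fall (fimp (feq #2 (tmul #1 #0)) (for_ (feq #1 (tnum 1)) (feq #1 #2))))).
Lemma Fprime_def : defines Fprime 1 (fun s _ => prime (s 0)).
Proof.
move=> s g _ /=; split.
- move=> [[k hk] H]; apply/primeP; split; first by rewrite hk.
  move=> d /dvdnP [k' hk'].
  have := H d k'; rewrite [d * k']mulnC -hk' => /(_ erefl) [->|->];
    by rewrite eqxx ?orbT.
- move/primeP=> [h1 h2]; split; first by exists (s 0 - 2); rewrite add1n -addn2 subnK.
  move=> d k hdk; have : d %| s 0 by rewrite hdk dvdn_mulr.
  by move/h2=> /orP [/eqP ->|/eqP ->]; [left|right].
Qed.

Definition Fmod : aform := for_ (fand (feq #2 tzero) (feq #0 #1))
  (fex (fand (feq #2 (tadd (tmul #0 #3) #1)) (fex (feq #4 (tadd #2 (tsucc #0)))))).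
Lemma Fmod_def : defines Fmod 3 (fun s _ => s 0 = s 1 %% s 2).
Proof.
move=> s g _ /=; split.
- move=> [[-> ->]|[q [-> [k hk]]]]; first by rewrite modn0.
  by rewrite modnMDl modn_small // hk addnS ltnS leq_addr.
- move=> ->; case: (posnP (s 2)) => [->|p2]; first by left; rewrite modn0.
  right; exists (s 1 %/ s 2); split; first exact: divn_eq.
  by exists (s 2 - (s 1 %% s 2).+1); rewrite addnS -addSn subnKC // ltn_pmod.
Qed.

Definition Fdiv : aform := for_ (fand (feq #2 tzero) (feq #0 tzero))
  (fex (fand (feq #2 (tadd (tmul #1 #3) #0)) (fex (feq #4 (tadd #1 (tsucc #0)))))).
Lemma Fdiv_def : defines Fdiv 3 (fun s _ => s 0 = s 1 %/ s 2).
Proof.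
move=> s g _ /=; split.
- move=> [[-> ->]|[r [-> [k hk]]]]; first by rewrite divn0.
  have p2 : 0 < s 2 by rewrite hk addnS.
  by rewrite divnMDl // divn_small ?addn0 // hk addnS ltnS leq_addr.
- move=> ->; case: (posnP (s 2)) => [->|p2]; first by left; rewrite divn0.
  right; exists (s 1 %% s 2); split; first exact: divn_eq.
  by exists (s 2 - (s 1 %% s 2).+1); rewrite addnS -addSn subnKC // ltn_pmod.
Qed.

Definition Fbeta : aform := inst [:: #0; #1; tsucc (tmul (tsucc #3) #2)] 4 Fmod.
Lemma Fbeta_def : defines Fbeta 4 (fun s _ => s 0 = beta (s 1) (s 2) (s 3)).
Proof. by move=> s g hg; rewrite /Fbeta; use_def Fmod_def g; rewrite /beta /= add1n. Qed.

(* Given [Fs] defining the step [u' = f i u] on the variables [(u', i, u)],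
   [Fiter Fs] defines [v = iteri n f a] on [(v, a, n)]; both formulas may use
   two further arguments (variables 3 and 4) and the parameters. The sequence
   of intermediate values is coded by a beta-function pair [(c, d)]. *)
Definition Fiter (Fs : aform) : aform :=
  fex (fex (fand (inst [:: #3; #1; #0; tzero] 7 Fbeta)
   (fand (inst [:: #2; #1; #0; #4] 7 Fbeta)
    (fall (fimp (inst [:: #0; #5] 8 Flt)
      (fex (fex (fand (inst [:: #1; #4; #3; #2] 10 Fbeta)
        (fand (inst [:: #0; #4; #3; tsucc #2] 10 Fbeta)
              (inst [:: #0; #2; #1; #8; #9] 10 Fs)))))))))).

Lemma Fiter_def Fs f :
  defines Fs 5 (fun s g => s 0 = f (s 3) (s 4) g (s 1) (s 2)) ->
  defines (Fiter Fs) 5 (fun s g => s 0 = iteri (s 2) (f (s 3) (s 4) g) (s 1)).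
Proof.
move=> hs s g hg /=; split.
- move=> [c [d [hA [hB hC]]]].
  move: hA hB; use_def Fbeta_def g; use_def Fbeta_def g => /= hA hB.
  suff H i : i <= s 2 -> beta c d i = iteri i (f (s 3) (s 4) g) (s 1) by rewrite hB H.
  elim: i => [|i IH] li; first by rewrite -hA.
  have := hC i; use_def Flt_def g => /= /(_ li) [w [u]].
  use_def Fbeta_def g; use_def Fbeta_def g; use_def hs g => /= -[hu [hw hf]].
  by rewrite -hw hf hu IH // ltnW.
- move=> hres.
  have [c [d hcd]] := beta_exists (s 2) (fun i => iteri i (f (s 3) (s 4) g) (s 1)).
  exists c, d; use_def Fbeta_def g; use_def Fbeta_def g => /=.
  split; first by rewrite hcd.
  split; first by rewrite hcd.
  move=> i; use_def Flt_def g => /= li.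
  exists (beta c d i), (beta c d i.+1).
  use_def Fbeta_def g; use_def Fbeta_def g; use_def hs g => /=.
  by rewrite !hcd // ltnW.
Qed.

Lemma iteri_big (R : Type) (idx : R) (op : Monoid.law idx) (F : nat -> R) n :
  iteri n (fun i u => op u (F i)) idx = \big[op/idx]_(i < n) F i.
Proof. by elim: n => [|n IH]; rewrite ?big_ord0 // big_ord_recr /= IH. Qed.

Definition Fpow : aform :=
  inst [:: #0; tnum 1; #2; #1; tzero] 3 (Fiter (feq #0 (tmul #2 #3))).
Lemma Fpow_def : defines Fpow 3 (fun s _ => s 0 = s 1 ^ s 2).
Proof.
have step : defines (feq #0 (tmul #2 #3)) 5
    (fun s g => s 0 = (fun e _ _ _ u => u * e) (s 3) (s 4) g (s 1) (s 2)).
  by move=> s g _.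
move=> s g hg; rewrite /Fpow; use_def (@Fiter_def _ (fun e _ _ _ u => u * e) step) g => /=.
suff -> : iteri (s 2) (fun _ u => u * s 1) 1 = s 1 ^ s 2 by [].
by elim: (s 2) => //= n ->; rewrite expnS mulnC.
Qed.

Definition Flogn : aform :=
  fif (fand (inst [:: #1] 3 Fprime) (fnot (feq #2 tzero)))
    (fex (fex (fand (inst [:: #1; #3; #2] 5 Fpow)
      (fand (inst [:: #0; #3; tsucc #2] 5 Fpow)
        (fand (inst [:: #1; #4] 5 Fdvd) (fnot (inst [:: #0; #4] 5 Fdvd)))))))
    (feq #0 tzero).

Lemma Flogn_def : defines Flogn 3 (fun s _ => s 0 = logn (s 1) (s 2)).
Proof.
move=> s g hg.
have hcond : sat (M:=Nstd) s (fand (inst [:: #1] 3 Fprime) (fnot (feq #2 tzero))) <->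
             prime (s 1) && (s 2 != 0).
  rewrite /fnot /=; use_def Fprime_def g => /=.
  by split=> [[-> h]|/andP [-> /eqP h]] //; apply/eqP.
rewrite /Flogn (sat_fif hcond) pb_bool; case: ifP => [/andP [ps1]|]; last first.
  move/negbT; rewrite negb_and negbK => h.
  suff -> : logn (s 1) (s 2) = 0 by [].
  by case/orP: h => [/negPf np|/eqP ->]; rewrite ?logn0 // lognE np.
rewrite -lt0n => s2p; split.
- cbn [sat fnot] => -[w2 [w1]]; use_def Fpow_def g; use_def Fpow_def g.
  use_def Fdvd_def g; use_def Fdvd_def g => /= -[-> [-> [h1 /negP h2]]].
  move: h1 h2; rewrite !pfactor_dvdn // -ltnNge ltnS => h1 h2.
  by apply/eqP; rewrite eqn_leq h1 h2.
- move=> h0; cbn [sat fnot]; exists (s 1 ^ s 0), (s 1 ^ (s 0).+1).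
  use_def Fpow_def g; use_def Fpow_def g; use_def Fdvd_def g; use_def Fdvd_def g => /=.
  by rewrite !pfactor_dvdn // h0 ltnn.
Qed.

(** * A defining formula for [e(x, Q + 1)] *)

Section DefiningE.
Variable theta : aform.

(* The parameters of the formulas below are laid out as in [R_e]: [x], [Q],
   [Delta], [P], then the parameters of [theta]. *)
Definition triple_rel (g : nat -> nat) (a b c : nat) : Prop :=
  sat (M:=Nstd) (scons a (scons b (scons c (fun i => g (Nat.add 4 i))))) theta.

Definition Ftheta : aform := inst [:: #0; #1; #2] 7 theta.
Lemma Ftheta_def : defines Ftheta 3 (fun s g => triple_rel g (s 0) (s 1) (s 2)).
Proof.
move=> s g hg; rewrite sat_inst; apply: sat_ext => -[|[|[|n]]] //=.
exact: (hg (Nat.add 4 n)).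
Qed.

Definition or3 (t a b c : aterm) : aform := for_ (feq t a) (for_ (feq t b) (feq t c)).

Definition Fsame_triple : aform :=
  fex (fex (fex (fand (inst [:: #2; #1; #0] 5 Ftheta)
    (fand (or3 #3 #2 #1 #0) (or3 #4 #2 #1 #0))))).
Lemma Fsame_triple_def :
  defines Fsame_triple 2 (fun s g => same_triple (triple_rel g) (s 0) (s 1)).
Proof.
move=> s g hg /=; split=> -[a [b [c H]]]; exists a, b, c; move: H;
  by use_def Ftheta_def g.
Qed.

Definition Fin_triple : aform :=
  fex (fex (fex (fand (inst [:: #2; #1; #0] 4 Ftheta) (or3 #3 #2 #1 #0)))).
Lemma Fin_triple_def : defines Fin_triple 1 (fun s g => in_triple (triple_rel g) (s 0)).
Proof.
move=> s g hg /=; split=> -[a [b [c H]]]; exists a, b, c; move: H;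
  by use_def Ftheta_def g.
Qed.

Definition Feps : aform :=
  fif (fand (inst [:: #1; #6] 3 Fle) (inst [:: #2; #6] 3 Fle))
    (fex (fand (inst [:: #0; tnum 2; #6] 4 Fpow) (inst [:: #1; #5; #0] 4 Fdiv)))
  (fif (inst [:: #1; #2] 3 Fsame_triple)
    (inst [:: #0; #4; tnum 3] 3 Fdiv)
  (fif (fand (feq #1 #2) (fand (inst [:: #6; #1] 3 Flt) (fnot (inst [:: #1] 3 Fin_triple))))
    (feq #0 #4)
    (feq #0 tzero))).

Lemma Feps_def :
  defines Feps 3 (fun s g => s 0 = epsN (triple_rel g) (g 2) (g 3) (g 1) (s 1) (s 2)).
Proof.
move=> s g hg; have [e4 e5 e6] : [/\ s 4 = g 1, s 5 = g 2 & s 6 = g 3] by rewrite !hg.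
set small := (s 1 <= g 3) && (s 2 <= g 3).
set st := same_triple (triple_rel g) (s 1) (s 2).
set diag := (s 1 == s 2) && (g 3 < s 1) && ~~ pb (in_triple (triple_rel g) (s 1)).
have hsmall :
    sat (M:=Nstd) s (fand (inst [:: #1; #6] 3 Fle) (inst [:: #2; #6] 3 Fle)) <-> small.
  by cbn [sat]; use_def Fle_def g; use_def Fle_def g; rewrite /= e6; split=> /andP.
have hst : sat (M:=Nstd) s (inst [:: #1; #2] 3 Fsame_triple) <-> st.
  by use_def Fsame_triple_def g.
have hdiag : sat (M:=Nstd) s (fand (feq #1 #2)
    (fand (inst [:: #6; #1] 3 Flt) (fnot (inst [:: #1] 3 Fin_triple)))) <-> diag.
  cbn [sat fnot]; use_def Flt_def g; use_def Fin_triple_def g; rewrite /= e6.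
  rewrite /diag; split=> [[e12 [lt nin]]|/andP [/andP [/eqP e12 lt] nin]].
  - by rewrite e12 eqxx -e12 lt; apply/negP => /pbP.
  - by do 2 split=> //; move/pbP; apply/negP.
rewrite /Feps /epsN -/small -/st -/diag (sat_fif hsmall) pb_bool.
case: small hsmall => _.
  cbn [sat teval]; split=> [[t]|h0].
  - by use_def Fpow_def g; use_def Fdiv_def g => /= -[->]; rewrite e4 e5.
  - by exists (2 ^ g 2); use_def Fpow_def g; use_def Fdiv_def g; rewrite /= e4 e5 h0.
rewrite (sat_fif hst); case: (pb st) hst => _; first by use_def Fdiv_def g; rewrite /= e4.
by rewrite (sat_fif hdiag) pb_bool; case: diag hdiag => _; cbn [sat teval]; rewrite ?e4.
Qed.

Definition sum_term (g : nat -> nat) (p i : nat) : nat :=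
  if prime i then epsN (triple_rel g) (g 2) (g 3) (g 1) p i * logn i (g 0) else 0.

Definition Fsum_term : aform :=
  fif (inst [:: #1] 3 Fprime)
    (fex (fex (fand (inst [:: #1; #4; #3] 5 Feps)
          (fand (inst [:: #0; #3; #5] 5 Flogn) (feq #2 (tmul #1 #0))))))
    (feq #0 tzero).
Lemma Fterm_def : defines Fsum_term 3 (fun s g => s 0 = sum_term g (s 2) (s 1)).
Proof.
move=> s g hg; have e3 : s 3 = g 0 := hg 0.
rewrite /Fsum_term (sat_fif (C := prime (s 1))); last by use_def Fprime_def g.
rewrite pb_bool /sum_term; case: (prime (s 1)); cbn [sat teval] => //; split.
- move=> [l [e]]; use_def Feps_def g; use_def Flogn_def g.
  by move=> /= -[-> [-> ->]]; rewrite e3.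
- move=> h0; exists (epsN (triple_rel g) (g 2) (g 3) (g 1) (s 2) (s 1)), (logn (s 1) (g 0)).
  by use_def Feps_def g; use_def Flogn_def g; rewrite /= e3.
Qed.

Definition Fsum : aform :=
  inst [:: #0; tzero; tsucc #2; #1; tzero] 2
    (Fiter (fex (fand (inst [:: #0; #2; #4] 6 Fsum_term) (feq #1 (tadd #3 #0))))).
Lemma Fsum_def : defines Fsum 2 (fun s g =>
  s 0 = \sum_(q < (g 0).+1 | prime q)
          epsN (triple_rel g) (g 2) (g 3) (g 1) (s 1) q * logn q (g 0)).
Proof.
have step : defines (fex (fand (inst [:: #0; #2; #4] 6 Fsum_term) (feq #1 (tadd #3 #0)))) 5
  (fun s g => s 0 = (fun e _ g i u => u + sum_term g e i) (s 3) (s 4) g (s 1) (s 2)).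
  move=> s g hg; cbn [sat teval]; split=> [[t]|h0].
  - by use_def Fterm_def g => /= -[-> ->].
  - by exists (sum_term g (s 3) (s 1)); use_def Fterm_def g; rewrite /= h0.
move=> s g hg; have e2 : s 2 = g 0 := hg 0.
rewrite /Fsum; use_def (@Fiter_def _ (fun e _ g i u => u + sum_term g e i) step) g.
by rewrite (iteri_big addn) /= e2 /sum_term -big_mkcond.
Qed.

Definition Fexpo : aform :=
  fex (fex (fand (inst [:: #1; #3] 4 Fsum)
   (fand (inst [:: #0; #3; #4] 4 Flogn) (feq #2 (tadd #1 #0))))).
Lemma Fexpo_def :
  defines Fexpo 2 (fun s g => s 0 = expoN (triple_rel g) (g 2) (g 3) (g 1) 1 0 (g 0) (s 1)).
Proof.
move=> s g hg; have e2 : s 2 = g 0 := hg 0.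
rewrite /Fexpo /expoN mul1n mul0n subn0; cbn [sat teval]; split.
- move=> [S [L]]; use_def Fsum_def g; use_def Flogn_def g.
  by move=> /= -[-> [-> ->]]; rewrite e2.
- move=> h0; eexists; eexists; use_def Fsum_def g; use_def Flogn_def g => /=.
  by split; [|split]; [reflexivity|reflexivity|rewrite h0 e2].
Qed.

Definition prod_term (g : nat -> nat) (i : nat) : nat :=
  if prime i then i ^ expoN (triple_rel g) (g 2) (g 3) (g 1) 1 0 (g 0) i else 1.

Definition Fprod_term : aform :=
  fif (inst [:: #1] 2 Fprime)
    (fex (fand (inst [:: #0; #2] 3 Fexpo) (inst [:: #1; #2; #0] 3 Fpow)))
    (feq #0 (tnum 1)).
Lemma Fpterm_def : defines Fprod_term 2 (fun s g => s 0 = prod_term g (s 1)).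
Proof.
move=> s g hg; rewrite /Fprod_term (sat_fif (C := prime (s 1))); last by use_def Fprime_def g.
rewrite pb_bool /prod_term; case: (prime (s 1)); cbn [sat teval] => //; split.
- by move=> [e]; use_def Fexpo_def g; use_def Fpow_def g => /= -[he ->]; rewrite he.
- by move=> h0; exists (expoN (triple_rel g) (g 2) (g 3) (g 1) 1 0 (g 0) (s 1));
    use_def Fexpo_def g; use_def Fpow_def g.
Qed.

Definition Fprod : aform :=
  inst [:: #0; tnum 1; #1; tzero; tzero] 2
    (Fiter (fex (fand (inst [:: #0; #2] 6 Fprod_term) (feq #1 (tmul #3 #0))))).
Lemma Fprod_def : defines Fprod 2 (fun s g =>
  s 0 = \prod_(p < s 1 | prime p) p ^ expoN (triple_rel g) (g 2) (g 3) (g 1) 1 0 (g 0) p).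
Proof.
have step : defines (fex (fand (inst [:: #0; #2] 6 Fprod_term) (feq #1 (tmul #3 #0)))) 5
  (fun s g => s 0 = (fun _ _ g i u => u * prod_term g i) (s 3) (s 4) g (s 1) (s 2)).
  move=> s g hg; cbn [sat teval]; split=> [[t]|h0].
  - by use_def Fpterm_def g => /= -[-> ->].
  - by exists (prod_term g (s 1)); use_def Fpterm_def g; rewrite /= h0.
move=> s g hg; rewrite /Fprod.
use_def (@Fiter_def _ (fun _ _ g i u => u * prod_term g i) step) g.
by rewrite (iteri_big muln) /= /prod_term -big_mkcond.
Qed.

Definition Fe : aform :=
  fif (feq #1 tzero) (feq #0 tzero)
    (fex (fand
      (fall (fimp (inst [:: #0] 3 Fprime)
              (fimp (inst [:: #1; #0] 3 Fle) (inst [:: tzero; #0] 3 Fexpo))))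
      (inst [:: #1; #0] 2 Fprod))).

Lemma Fe_def : defines Fe 1 (fun s g => eN_rel (triple_rel g) (g 2) (g 3) (g 1) 1 0 (g 0) (s 0)).
Proof.
move=> s g hg; have e1 : s 1 = g 0 := hg 0.
rewrite /Fe (sat_fif (C := g 0 == 0)); last by rewrite /= e1; split=> /eqP.
rewrite pb_bool /eN_rel andbF; case: (g 0 == 0); cbn [sat teval] => //.
split=> -[M [HM Hp]]; exists M; split.
- move=> p pp lMp; have := HM p.
  by use_def Fprime_def g; use_def Fle_def g; use_def Fexpo_def g => /= /(_ pp lMp) <-.
- by move: Hp; use_def Fprod_def g.
- move=> p; use_def Fprime_def g; use_def Fle_def g; use_def Fexpo_def g => /= pp lMp.
  by rewrite HM.
- by use_def Fprod_def g.
Qed.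

End DefiningE.

(** * The identity in the standard model *)

Lemma prod_prime_logn x M : 0 < x -> x < M -> \prod_(p < M | prime p) p ^ logn p x = x.
Proof.
move=> x_gt0 xM; have M_gt0 : 0 < M by apply: leq_ltn_trans xM.
rewrite -[RHS](partnT x_gt0) (@widen_partn M.-1) ?prednK // ?big_mkord; last first.
  by rewrite -ltnS prednK.
rewrite [RHS](bigID (fun p : 'I_M => prime p)) /= [X in _ = _ * X]big1 ?muln1.
- exact: eq_bigl.
- by move=> p np; rewrite lognE (negbTE np).
Qed.

Section StandardModel.
Variable SN : nat -> nat -> nat -> Prop.
Variables Delta P Q : nat.
Hypothesis SN_prime_gtP : forall a b c, SN a b c ->
  [/\ prime a, prime b, prime c & [/\ P < a, P < b & P < c]].
Hypothesis SN_disjoint : forall a b c a' b' c', SN a b c -> SN a' b' c' ->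
  (a, b, c) = (a', b', c') \/
  (forall u, (u = a \/ u = b \/ u = c) -> ~ (u = a' \/ u = b' \/ u = c')).
Hypothesis P_ge5 : 5 <= P.

Local Notation eps := (epsN SN Delta P Q).

Lemma in_triple_gtP s : in_triple SN s -> P < s.
Proof.
move=> [a [b [c [h hs]]]]; have [_ _ _ [ha hb hc]] := SN_prime_gtP h.
by case: hs => [->|[->|->]].
Qed.

Lemma same_triple_bounded n : exists b, forall s t, t < n -> same_triple SN s t -> s < b.
Proof.
elim: n => [|n [b hb]]; first by exists 0.
have [[a1 [a2 [a3 [h hn]]]]|nin] := classic (in_triple SN n); last first.
  exists b => s t; rewrite ltnS leq_eqVlt => /orP [/eqP ->|]; last exact: hb.
  by move=> [a1 [a2 [a3 [h' [_ hn']]]]]; case: nin; exists a1, a2, a3.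
exists (maxn b (a1 + a2 + a3).+1) => s t; rewrite ltnS leq_eqVlt leq_max.
case/orP => [/eqP ->|ltn] st; last by rewrite (hb s t).
move: st => [a1' [a2' [a3' [h' [hs hn']]]]].
case: (SN_disjoint h h') => [[e1 e2 e3]|dj]; last by case: (dj n hn hn').
by move: hs; rewrite -e1 -e2 -e3 => -[|[|]] ->; apply/orP; right; lia.
Qed.

Lemma eps_col_small s k : k <= P -> eps s k = if s <= P then Q %/ 2 ^ Delta else 0.
Proof.
move=> kP; rewrite /epsN kP andbT; case: leqP => // Ps.
case: (pbP (same_triple SN s k)) => [[a [b [c [h [_ hk]]]]]|_].
  have : P < k by apply: in_triple_gtP; exists a, b, c.
  by rewrite ltnNge kP.
by case: eqP => [ek|] //; move: Ps; rewrite ek ltnNge kP.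
Qed.

Lemma eps_row_large s t : P < s -> t < s -> ~ same_triple SN s t -> eps s t = 0.
Proof.
move=> Ps ts nst; rewrite /epsN leqNgt Ps /=.
by case: pbP => // _; rewrite (gtn_eqF ts).
Qed.

Definition epsv (N x s : nat) : nat := \sum_(i < N | prime i) eps s i * logn i x.

Lemma epsv_widen N x s : x < N ->
  \sum_(i < x.+1 | prime i) eps s i * logn i x = epsv N x s.
Proof.
move=> xN; rewrite (big_ord_widen_cond N prime (fun i => eps s i * logn i x)) //.
rewrite /epsv [RHS](bigID (fun i : 'I_N => i < x.+1)) /= [X in _ = _ + X]big1 ?addn0 //.
by move=> i /andP [_]; rewrite -leqNgt => /ltn_log0 ->; rewrite muln0.
Qed.

Lemma epsvM N x y s : 0 < x -> 0 < y -> epsv N (x * y) s = epsv N x s + epsv N y s.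
Proof.
by move=> x0 y0; rewrite /epsv -big_split; apply: eq_bigr => i _; rewrite lognM // mulnDr.
Qed.

Lemma epsv_prime N t s : prime t -> t < N -> epsv N t s = eps s t.
Proof.
move=> pt tN; rewrite /epsv (bigD1 (Ordinal tN)) //= logn_prime // eqxx muln1.
rewrite big1 ?addn0 // => i /andP [_ ne]; rewrite logn_prime //.
by move: ne; rewrite -val_eqE /= => /negbTE ->; rewrite muln0.
Qed.

Definition eps_factor (N x : nat) : nat := \prod_(s < N | prime s) s ^ epsv N x s.

(* Past [N], both [logn s x] and the row [s] of [eps] on the prime factors of
   [x] vanish, so [N] is a valid bound in [eN_rel]. *)
Lemma eN_rel_eps_factor x N : 0 < x -> x < N -> P < N ->
    (forall s t, t <= x -> same_triple SN s t -> s < N) ->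
  eN_rel SN Delta P Q 1 0 x (x * eps_factor N x).
Proof.
move=> x_gt0 xN PN mateN; rewrite /eN_rel eqn0Ngt x_gt0 /=; exists N; split.
- move=> s ps Ns; rewrite /expoN mul1n mul0n subn0 ltn_log0 ?addn0 //.
    rewrite big1 // => i _; rewrite eps_row_large ?(leq_trans PN) //.
      exact: leq_trans (ltn_ord i) (leq_trans xN Ns).
    by move/mateN => /(_ (ltn_ord i)); rewrite ltnNge Ns.
  exact: leq_trans xN Ns.
- rewrite mulnC -{2}(prod_prime_logn x_gt0 xN) /eps_factor -big_split /=.
  by apply: eq_bigr => i _; rewrite /expoN mul1n mul0n subn0 (epsv_widen _ xN) expnD.
Qed.

Variables p q r : nat.
Hypothesis pqr_in_SN : SN p q r.

Lemma same_triple_pqr s t : (t = p \/ t = q \/ t = r) ->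
  same_triple SN s t <-> (s = p \/ s = q \/ s = r).
Proof.
move=> mt; split => [[a [b [c [h [hs ht]]]]]|ms]; last by exists p, q, r.
case: (SN_disjoint pqr_in_SN h) => [[-> -> ->] //|dj].
by case: (dj t mt ht).
Qed.

Lemma eps_col_triple s t : (t = p \/ t = q \/ t = r) ->
  eps s t = if pb (s = p \/ s = q \/ s = r) then Q %/ 3 else 0.
Proof.
move=> mt; have Pt : P < t by apply: in_triple_gtP; exists p, q, r.
rewrite /epsN (leqNgt t) Pt andbF (pb_iff (same_triple_pqr s mt)).
case: (pbP (_ \/ _)) => //= nm; case: eqP => //= est.
by case: nm; rewrite est.
Qed.

Lemma eps_triple_balanced s :
  eps s 3 + eps s p = eps s 5 + eps s q /\ eps s 5 + eps s q = eps s 2 + eps s r.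
Proof.
have col k : k <= 5 -> eps s k = if s <= P then Q %/ 2 ^ Delta else 0.
  by move=> k5; apply: eps_col_small; apply: leq_trans k5 P_ge5.
rewrite (col 3) ?(col 5) ?(col 2) //.
by rewrite (@eps_col_triple s p) ?(@eps_col_triple s q) ?(@eps_col_triple s r); tauto.
Qed.

Lemma epsv_scaled_prime N R k t s : 0 < R -> prime k -> prime t -> k < N -> t < N ->
  epsv N (R * (k * t)) s = epsv N R s + (eps s k + eps s t).
Proof.
move=> R0 pk pt kN tN.
have [k0 t0] := (prime_gt0 pk, prime_gt0 pt).
by rewrite !epsvM ?muln_gt0 ?k0 ?t0 // (epsv_prime _ pk kN) (epsv_prime _ pt tN).
Qed.

Lemma eps_factor_triple N R : 0 < R -> 5 < N -> p < N -> q < N -> r < N ->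
  eps_factor N (R * (3 * p)) = eps_factor N (R * (5 * q)) /\
  eps_factor N (R * (5 * q)) = eps_factor N (R * (2 * r)).
Proof.
have [pp pq pr _] := SN_prime_gtP pqr_in_SN.
move=> R0 N5 pN qN rN; have [N2 N3] : 2 < N /\ 3 < N by split; apply: leq_ltn_trans N5.
rewrite /eps_factor; split; apply: eq_bigr => i _; rewrite !epsv_scaled_prime //;
  congr (_ ^ (_ + _)); [exact: (eps_triple_balanced i).1 | exact: (eps_triple_balanced i).2].
Qed.

Hypothesis pqr_linear : 3 * p + 5 * q = 2 * r.

Lemma e_identity_nat R : exists a b c,
  [/\ eN_rel SN Delta P Q 1 0 (R * (3 * p)) a, eN_rel SN Delta P Q 1 0 (R * (5 * q)) b,
      eN_rel SN Delta P Q 1 0 (R * (2 * r)) c & a + b = c].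
Proof.
have [pp pq pr _] := SN_prime_gtP pqr_in_SN.
have [->|R0] := posnP R; first by exists 0, 0, 0; rewrite /eN_rel !mul0n /= andbF.
set x1 := R * (3 * p); set x2 := R * (5 * q); set x3 := R * (2 * r).
have [b hb] := same_triple_bounded (x1 + x2 + x3).+1.
set N := (P + b + (x1 + x2 + x3)).+1.
have xN x : x <= x1 + x2 + x3 -> x < N by rewrite /N; lia.
have eN x : 0 < x -> x <= x1 + x2 + x3 -> eN_rel SN Delta P Q 1 0 x (x * eps_factor N x).
  move=> x0 hx; apply: eN_rel_eps_factor => //; first exact: xN.
    by rewrite /N; lia.
  move=> s t tx /hb; rewrite ltnS => /(_ (leq_trans tx hx)) sb; rewrite /N; lia.
have [pN qN rN] : [/\ p < N, q < N & r < N].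
  have le_x k t : 0 < k -> t <= R * (k * t).
    by move=> k0; rewrite mulnA mulnC leq_pmulr // muln_gt0 R0.
  move: (le_x 3 p isT) (le_x 5 q isT) (le_x 2 r isT).
  by rewrite /N -/x1 -/x2 -/x3 => *; split; lia.
have [e12 e23] := @eps_factor_triple N R R0 ltac:(rewrite /N; lia) pN qN rN.
exists (x1 * eps_factor N x1), (x2 * eps_factor N x2), (x3 * eps_factor N x3).
have [x1_gt0 x2_gt0 x3_gt0] : [/\ 0 < x1, 0 < x2 & 0 < x3].
  by rewrite !muln_gt0 R0 !prime_gt0.
split; try (apply: eN => //; lia).
by rewrite /x1 /x2 /x3 e12 e23 -mulnDl -mulnDr pqr_linear.
Qed.

End StandardModel.

(** * Transfer to [B] *)

Lemma sat_Fprime_at (M : arith_struct) (s : nat -> M) t :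
  sat s (inst [:: t] 0 Fprime) <-> primeB (teval s t).
Proof. by rewrite sat_inst. Qed.

Lemma sat_Flt_at (M : arith_struct) (s : nat -> M) u t :
  sat s (inst [:: u; t] 0 Flt) <-> ltB (teval s u) (teval s t).
Proof. by rewrite sat_inst. Qed.

Lemma primeB_nat (n : nat) : primeB (B:=Nstd) n <-> prime n.
Proof. exact: (@Fprime_def (scons n id) id). Qed.

Lemma ltB_nat (m n : nat) : ltB (B:=Nstd) m n <-> m < n.
Proof. exact: (@Flt_def (scons m (scons n id)) id). Qed.

Lemma nonstandard_ge2 (B : arith_struct) (x : B) :
  models_ThN B -> ~ standard x -> exists k : B, x = sS (sS k).
Proof.
set F := for_ (feq #0 tzero) (for_ (feq #0 (tnum 1)) (fex (feq #1 (tsucc (tsucc #0))))).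
have FN r : sat (M:=Nstd) r F.
  by rewrite /F /=; case: (r 0) => [|[|k]]; [left|right; left|right; right; exists k].
move=> hB nst; case: (hB F FN (scons x (fun _ => s0 B))) => [e|[e|//]].
- by case: nst; exists 0.
- by case: nst; exists 1.
Qed.

Lemma kth_prime_ge5 D P : is_kth_prime (2 ^ D) P -> 2 <= D -> 5 <= P.
Proof.
move=> [_ hc] D2; rewrite leqNgt; apply/negP => P5.
have : 4 <= 2 ^ D by rewrite (_ : 4 = 2 ^ 2) // leq_pexp2l.
have : count prime (iota 0 P) <= 2 by case: P P5 {hc} => [|[|[|[|[|P]]]]].
by rewrite hc; case: (2 ^ D) => //= n; lia.
Qed.

Section Transfer.
Variables theta fP : aform.

(* The free variables of the formulas below are
   [Q, R, p, q, r, Delta, P] followed by the parameters of [theta]. *)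
Definition Ftheta_pqr : aform := inst [:: #2; #3; #4] 7 theta.
Definition Flinear : aform :=
  feq (tadd (tmul (tnum 3) #2) (tmul (tnum 5) #3)) (tmul (tnum 2) #4).
Definition Ftriples_prime : aform := fall (fall (fall (fimp (inst [:: #2; #1; #0] 10 theta)
  (fand (inst [:: #2] 0 Fprime) (fand (inst [:: #1] 0 Fprime) (fand (inst [:: #0] 0 Fprime)
    (fand (inst [:: #9; #2] 0 Flt) (fand (inst [:: #9; #1] 0 Flt) (inst [:: #9; #0] 0 Flt))))))))).
Definition Ftriples_disjoint : aform := fall (fall (fall (fall (fall (fall
  (fimp (inst [:: #5; #4; #3] 13 theta) (fimp (inst [:: #2; #1; #0] 13 theta)
    (for_ (fand (feq #5 #2) (fand (feq #4 #1) (feq #3 #0)))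
      (fall (fimp (or3 #0 #6 #5 #4)
               (fimp (or3 #0 #3 #2 #1) fbot))))))))))).
Definition FP : aform := fsubst (scons #6 (scons #5 (fun _ => tzero))) fP.
Definition FDelta_ge2 : aform := fex (feq #6 (tsucc (tsucc #0))).
Definition Fidentity : aform := fex (fex (fex (fand
  (inst [:: #2; tmul #4 (tmul (tnum 3) #5); #3; #8; #9] 10 (Fe theta))
  (fand (inst [:: #1; tmul #4 (tmul (tnum 5) #6); #3; #8; #9] 10 (Fe theta))
  (fand (inst [:: #0; tmul #4 (tmul (tnum 2) #7); #3; #8; #9] 10 (Fe theta))
        (feq (tadd #2 #1) #0)))))).
Definition Phi : aform :=
  fimp Ftheta_pqr (fimp Flinear (fimp Ftriples_prime (fimp Ftriples_disjoint
    (fimp FP (fimp FDelta_ge2 Fidentity))))).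

Section PhiSemantics.
Variables (M : arith_struct) (s : nat -> M).
Let params : nat -> M := fun i => s (Nat.add 7 i).
Let theta_at (a b c : M) : Prop := sat (scons a (scons b (scons c params))) theta.

Lemma sat_Ftheta_pqr : sat s Ftheta_pqr <-> theta_at (s 2) (s 3) (s 4).
Proof. by rewrite sat_inst_scons. Qed.

Lemma sat_Flinear : sat s Flinear <->
  sadd (smul (num M 3) (s 2)) (smul (num M 5) (s 3)) = smul (num M 2) (s 4).
Proof. by []. Qed.

Lemma sat_Ftriples_prime : sat s Ftriples_prime <->
  forall a b c, theta_at a b c ->
    [/\ primeB a, primeB b, primeB c & [/\ ltB (s 6) a, ltB (s 6) b & ltB (s 6) c]].
Proof.
cbn [sat Ftriples_prime]; split=> H a b c; move: (H a b c);
  rewrite sat_inst_scons !sat_Fprime_at !sat_Flt_at /=.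
- by move=> h /h [? [? [? [? [? ?]]]]].
- by move=> h /h [? ? ? [? ? ?]].
Qed.

Lemma sat_Ftriples_disjoint : sat s Ftriples_disjoint <->
  forall a b c a' b' c', theta_at a b c -> theta_at a' b' c' ->
    (a, b, c) = (a', b', c') \/
    (forall u, (u = a \/ u = b \/ u = c) -> ~ (u = a' \/ u = b' \/ u = c')).
Proof.
cbn [sat Ftriples_disjoint]; split=> H a b c a' b' c';
  move: (H a b c a' b' c'); rewrite !sat_inst_scons /= => h ht ht'.
- by case: (h ht ht') => [[-> [-> ->]]|]; [left|right].
- by case: (h ht ht') => [[-> -> ->]|]; [left|right].
Qed.

Lemma sat_FP : sat s FP <-> sat (scons (s 6) (scons (s 5) (fun _ => s0 M))) fP.
Proof. by rewrite sat_subst; apply: sat_ext => -[|[|n]]. Qed.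

Lemma sat_Fidentity : sat s Fidentity <-> exists a b c,
  [/\ sat (scons a (scons (smul (s 1) (smul (num M 3) (s 2)))
        (scons (s 0) (scons (s 5) (scons (s 6) params))))) (Fe theta),
      sat (scons b (scons (smul (s 1) (smul (num M 5) (s 3)))
        (scons (s 0) (scons (s 5) (scons (s 6) params))))) (Fe theta),
      sat (scons c (scons (smul (s 1) (smul (num M 2) (s 4)))
        (scons (s 0) (scons (s 5) (scons (s 6) params))))) (Fe theta)
    & sadd a b = c].
Proof.
cbn [sat Fidentity]; rewrite /params; split=> -[a [b [c H]]]; exists a, b, c;
  move: H; rewrite !sat_inst_scons /=.
- by move=> [? [? [? ?]]].
- by move=> [? ? ? ?].
Qed.

End PhiSemantics.

Lemma sat_Fe_R_e (r : nat -> nat) : sat (M:=Nstd) r (Fe theta) <-> R_e theta (Posz 1) r.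
Proof. exact: (@Fe_def theta r (fun n => r (Nat.add 1 n))). Qed.

Hypothesis fP_P : forall r, sat (M:=Nstd) r fP <-> R_P r.

Lemma Phi_nat r : sat (M:=Nstd) r Phi.
Proof.
rewrite /Phi; cbn [sat]; rewrite sat_Ftheta_pqr sat_Flinear sat_Ftriples_prime.
rewrite sat_Ftriples_disjoint sat_FP fP_P sat_Fidentity.
move=> hpqr lin hprimes hdisj hP [k /= hk].
have P_ge5 : 5 <= r 6 by apply: kth_prime_ge5 hP _; rewrite hk.
have SN_prime_gtP a b c :
    sat (scons a (scons b (scons c (fun i => r (Nat.add 7 i))))) theta ->
    [/\ prime a, prime b, prime c & [/\ r 6 < a, r 6 < b & r 6 < c]].
  case/hprimes => /primeB_nat ? /primeB_nat ? /primeB_nat ?.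
  by case=> /ltB_nat ? /ltB_nat ? /ltB_nat ?.
have [a [b [c [ha hb hc habc]]]] :=
  e_identity_nat (r 5) (r 0) SN_prime_gtP hdisj P_ge5 hpqr lin (r 1).
by exists a, b, c; split; try apply/sat_Fe_R_e.
Qed.

End Transfer.

Lemma eB_of_sat_Fe (B : arith_struct) (Delta P : B) theta sigma (Q x v : B) :
  inO Delta Q ->
  sat (scons v (scons x (scons Q (scons Delta (scons P sigma))))) (Fe theta) ->
  eB Delta P theta sigma x (sadd Q (num B 1)) v.
Proof.
move=> hQ hFe; exists Q, (Posz 1); do 2 split=> //.
by exists (Fe theta); split=> // r; rewrite sat_Fe_R_e.
Qed.

Theorem lemma4p7
  (B : arith_struct) (hB : models_ThN B)
  (hBns : exists x : B, ~ standard x)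
  (Delta : B) (hDelta : ~ standard Delta)
  (P : B) (hP : inB R_P (scons P (scons Delta (fun _ => s0 B))))
  (theta : aform) (sigma : nat -> B)
  (hS : forall p q r : B, sat (scons p (scons q (scons r sigma))) theta ->
          [/\ primeB p, primeB q, primeB r,
              sadd (smul (num B 3) p) (smul (num B 5) q) = smul (num B 2) r
            & [/\ ltB P p, ltB P q & ltB P r]])
  (hdisj : forall p q r p' q' r' : B,
          sat (scons p (scons q (scons r sigma))) theta ->
          sat (scons p' (scons q' (scons r' sigma))) theta ->
          (p, q, r) = (p', q', r') \/
          (forall u : B, (u = p \/ u = q \/ u = r) -> ~ (u = p' \/ u = q' \/ u = r'))) :
  forall Q R : B, inO Delta Q -> inO Delta R ->
  forall p q r : B, sat (scons p (scons q (scons r sigma))) theta ->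
  exists a b c : B,
    [/\ eB Delta P theta sigma (smul R (smul (num B 3) p)) (sadd Q (num B 1)) a,
        eB Delta P theta sigma (smul R (smul (num B 5) q)) (sadd Q (num B 1)) b,
        eB Delta P theta sigma (smul R (smul (num B 2) r)) (sadd Q (num B 1)) c
      & sadd a b = c].
Proof.
move=> Q R hQ _ p q r hpqr.
have [fP [fP_P hPsat]] := hP.
have [_ _ _ lin _] := hS _ _ _ hpqr.
have hprimes a b c : sat (scons a (scons b (scons c sigma))) theta ->
    [/\ primeB a, primeB b, primeB c & [/\ ltB P a, ltB P b & ltB P c]].
  by case/hS.
have := hB _ (@Phi_nat theta fP fP_P)
  (scons Q (scons R (scons p (scons q (scons r (scons Delta (scons P sigma))))))).
rewrite /Phi; cbn [sat]; rewrite sat_Ftheta_pqr sat_Flinear sat_Ftriples_prime.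
rewrite sat_Ftriples_disjoint sat_FP sat_Fidentity.
move=> /(_ hpqr lin hprimes hdisj hPsat (nonstandard_ge2 hB hDelta)).
by move=> [a [b [c [ha hb hc habc]]]]; exists a, b, c; split; try apply: eB_of_sat_Fe.
Qed.
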